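(* Let $\Sigma=(\mathbb{N}_0,X,U,\mathscr{U},\phi)$ be a control system as in the standing setup (in particular $\mathscr U$ is a compact metrizable space and $\phi$ is continuous), and let $Q\subset X$ be a compact control set with nonempty interior. Then the following are equivalent: (1) $Q$ is equi-invariant; (2) $Q$ is finitely equi-invariant; (3) $Q$ has bounded invariance complexity.
   Context: Standing setup: $(X,d)$ is a metric space, $U$ is a compact metric space, and $F:X\times U\to X$ is a map such that $F_u:=F(\cdot,u)$ is continuous for every $u\in U$. Let $\mathscr U=U^{\mathbb N_0}$ with the product topology. For $\omega=(\omega_0,\omega_1,\dots)\in\mathscr U$, $x\in X$, set $\phi(0,x,\omega)=x$ and $\phi(k,x,\omega)=F_{\omega_{k-1}}\circ\cdots\circ F_{\omega_0}(x)$ for $k\ge1$. It is assumed that $\phi:\mathbb N_0\times X\times\mathscr U\to X$ is continuous. Notation: $\mathbb N=\{1,2,\dots\}$; $B(x,\delta)$ is the open ball; $d(y,Q)=\inf_{q\in Q}d(y,q)$; $B_\varepsilon(Q)=\{y:d(y,Q)<\varepsilon\}$; $\phi(A,x,\omega)=\{\phi(k,x,\omega):k\in A\}$. Control set: $D\subset X$ is a control set if (i) for every $x\in D$ there is $\omega\in\mathscr U$ with $\phi(\mathbb N_0,x,\omega)\subset D$; (ii) for every $x\in D$, $D\subset\operatorname{cl}\mathcal O^+(x)$, where $\mathcal O^+(x)=\{\phi(m,x,\omega):m\in\mathbb N_0,\omega\in\mathscr U\}$; (iii) $D$ is maximal with (i) and (ii). Equi-invariance: $x\in Q$ is a finitely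 equi-invariant point of $Q$ if for every $\varepsilon>0$ there exist $\delta>0$ and a finite set $F\subset\mathscr U$ such that for every $y\in B(x,\delta)\cap Q$ there is $\omega\in F$ with $\phi(\mathbb N_0,y,\omega)\subset B_\varepsilon(Q)$; it is an equi-invariant point if this holds with $F$ a singleton. $Q$ is (finitely) equi-invariant if every point of $Q$ is a (finitely) equi-invariant point. Invariance complexity: $Q^\varepsilon_{n,\omega}=\{x\in Q:\phi(\{0,\dots,n-1\},x,\omega)\subset B_\varepsilon(Q)\}$; $F\subset\mathscr U$ is $(n,\varepsilon,Q)$-spanning if $Q=\bigcup_{\omega\in F}Q^\varepsilon_{n,\omega}$; $r_{inv}(n,\varepsilon,Q)$ is the minimal cardinality of such $F$; $Q$ has bounded invariance complexity if for every $\varepsilon>0$ there is $C$ with $r_{inv}(n,\varepsilon,Q)\le C$ for all $n\in\mathbb N$. *)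

From HB Require Import structures.
From mathcomp Require Import all_boot all_order all_algebra.
From mathcomp Require Import all_classical all_reals all_analysis.
Set Implicit Arguments. Unset Strict Implicit. Unset Printing Implicit Defensive.
Import Order.TTheory GRing.Theory Num.Theory.
Local Open Scope classical_set_scope.
Local Open Scope ring_scope.

Section ControlSystem.
Context {R : realType} {X U : metricType R} (F : X -> U -> X).

Fixpoint phi (k : nat) (x : X) (w : nat -> U) : X :=
  match k with
  | 0 => x
  | k'.+1 => F (phi k' x w) (w k')
  end.

Definition orbit_plus (x : X) : set X :=
  [set y | exists m w, y = phi m x w].

Definition control_props (D : set X) : Prop :=
  (forall x, D x -> exists w : nat -> U, forall k, D (phi k x w)) /\
  (forall x, D x -> D `<=` closure (orbit_plus x)).

Definition control_set (D : set X) : Prop :=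
  control_props D /\
  (forall D', control_props D' -> D `<=` D' -> D' = D).

Definition dist_set (y : X) (Q : set X) : R :=
  inf [set mdist y q | q in Q].

Definition nbhd_set (eps : R) (Q : set X) : set X :=
  [set y | dist_set y Q < eps].

Definition oball (x : X) (delta : R) : set X := [set y | mdist x y < delta].

Definition finitely_equi_invariant_point (Q : set X) (x : X) : Prop :=
  Q x /\
  forall eps : R, 0 < eps ->
    exists delta : R, 0 < delta /\
    exists Fs : set (nat -> U), finite_set Fs /\
      forall y, (oball x delta `&` Q) y ->
        exists2 w, Fs w & forall k, nbhd_set eps Q (phi k y w).

Definition equi_invariant_point (Q : set X) (x : X) : Prop :=
  Q x /\
  forall eps : R, 0 < eps ->
    exists delta : R, 0 < delta /\
    exists w : nat -> U,
      forall y, (oball x delta `&` Q) y ->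
        forall k, nbhd_set eps Q (phi k y w).

Definition finitely_equi_invariant (Q : set X) : Prop :=
  forall x, Q x -> finitely_equi_invariant_point Q x.

Definition equi_invariant (Q : set X) : Prop :=
  forall x, Q x -> equi_invariant_point Q x.

Definition Qnw (eps : R) (n : nat) (w : nat -> U) (Q : set X) : set X :=
  [set x | Q x /\ forall k, (k < n)%N -> nbhd_set eps Q (phi k x w)].

Definition spanning (n : nat) (eps : R) (Q : set X) (Fs : set (nat -> U)) : Prop :=
  Q = \bigcup_(w in Fs) Qnw eps n w Q.

(* r_inv(n,eps,Q) <= C, i.e. some spanning set has at most C elements *)
Definition r_inv_le (n : nat) (eps : R) (Q : set X) (C : nat) : Prop :=
  exists Fs : set (nat -> U), spanning n eps Q Fs /\ (Fs #<= `I_C)%card.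

Definition bounded_invariance_complexity (Q : set X) : Prop :=
  forall eps : R, 0 < eps ->
    exists C : nat, forall n : nat, (0 < n)%N -> r_inv_le n eps Q C.

End ControlSystem.

From HB Require Import structures.
From mathcomp Require Import all_boot all_order all_algebra.
From mathcomp Require Import all_classical all_reals all_analysis.
Import Order.TTheory GRing.Theory Num.Theory.
Local Open Scope classical_set_scope.
Local Open Scope ring_scope.

(* The three properties are compared through an intermediate, uniform notion:
   Q is uniformly finitely invariant at scale eps if one finite set of
   controls contains, for every y in Q, a control keeping the whole forward
   trajectory of y inside B_eps(Q).  Holding at every scale, this notion
   - follows from finite equi-invariance by compactness of Q;
   - follows from bounded invariance complexity by compactness of the control
     space in the pointwise topology: families spanning up to time n have a
     cluster point along an ultrafilter, and the cluster controls work forever;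
   - trivially implies finite equi-invariance and bounded complexity;
   - implies equi-invariance: one of the finitely many controls works on a
     nonempty open set V in the interior of Q; every point of Q is steered
     into V inside Q (controllability and maximality of the control set), and
     by continuity the same steering control works for all nearby points.
   Equi-invariance trivially implies finite equi-invariance. *)

Section Trajectories.
Context {R : realType} {X U : metricType R} (F : X -> U -> X).

Lemma phi_shift a b x w :
  phi F (a + b) x w = phi F b (phi F a x w) (fun n => w (a + n)%N).
Proof. by elim: b => [|b IH] /=; rewrite ?addn0 // addnS /= IH. Qed.

Lemma phi_prefix k x w w' : (forall n, (n < k)%N -> w n = w' n) ->
  phi F k x w = phi F k x w'.
Proof.
elim: k => [//|k IH] ww' /=; rewrite ww' // IH // => n nk.
exact/ww'/ltnW.
Qed.

Definition concat_ctrl (m : nat) (w w' : nat -> U) : nat -> U :=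
  fun n => if (n < m)%N then w n else w' (n - m)%N.

Lemma phi_concat_lo m w w' k x : (k <= m)%N ->
  phi F k x (concat_ctrl m w w') = phi F k x w.
Proof.
by move=> km; apply: phi_prefix => n nk; rewrite /concat_ctrl (leq_trans nk km).
Qed.

Lemma phi_concat_hi m w w' k x :
  phi F (m + k) x (concat_ctrl m w w') = phi F k (phi F m x w) w'.
Proof.
rewrite phi_shift phi_concat_lo //; apply: phi_prefix => n _.
by rewrite /concat_ctrl ltnNge leq_addr /= addKn.
Qed.

Lemma phi_continuous (hF : forall u : U, continuous (fun x : X => F x u)) k w :
  continuous (fun x => phi F k x w).
Proof.
elim: k => [|k IH] x /=; first exact: cvg_id.
exact: (continuous_comp (IH x) (hF (w k) _)).
Qed.

Lemma phi_continuous_ctrl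
    (hphi : continuous (fun p : nat * X * {ptws nat -> U} => phi F p.1.1 p.1.2 p.2))
    k y : continuous (fun w : {ptws nat -> U} => phi F k y w).
Proof.
move=> o; have pair_o : {for o, continuous (fun w : {ptws nat -> U} => (k, y, w))}.
  exact: (@cvg_pair _ _ _ _ (nbhs (k, y)) (nbhs o) _ _ _ (fun=> (k, y)) id
    (cvg_cst _) cvg_id).
exact: (continuous_comp pair_o (hphi (k, y, o))).
Qed.

End Trajectories.

Section Neighbourhoods.
Context {R : realType} {X : metricType R}.

Lemma nbhd_setP (Q : set X) eps p : Q !=set0 ->
  nbhd_set eps Q p <-> exists2 q, Q q & mdist p q < eps.
Proof.
move=> [q0 Qq0]; rewrite /nbhd_set /dist_set /=; split.
  move=> /inf_lt [|_ [q Qq <-] lt]; last by exists q.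
  by exists (mdist p q0), q0.
move=> [q Qq lt]; apply: le_lt_trans lt.
apply: ge_inf; last by exists q.
by exists 0 => _ [r _ <-]; exact: mdist_ge0.
Qed.

Lemma nbhd_set_half (Q : set X) eps p q : Q !=set0 ->
  nbhd_set (eps / 2) Q p -> mdist q p < eps / 2 -> nbhd_set eps Q q.
Proof.
move=> Qn /(nbhd_setP _ _ _ Qn) [r Qr pr] qp; apply/nbhd_setP => //.
exists r => //; rewrite (splitr eps).
exact: le_lt_trans (metric_triangle q p r) (ltrD qp pr).
Qed.

Lemma near_mdist_lt {T : topologicalType} {f : T -> X} {t : T} {eps : R} :
  {for t, continuous f} -> 0 < eps -> \forall s \near t, mdist (f t) (f s) < eps.
Proof.
move=> cf e0; have ball_ft : nbhs (f t) [set p | mdist (f t) p < eps].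
  by apply/nbhs_ballP; exists eps => // p; rewrite ballEmdist.
exact: cf ball_ft.
Qed.

End Neighbourhoods.

Section ControlSets.
Context {R : realType} {X U : metricType R} (F : X -> U -> X).
Hypothesis hF : forall u : U, continuous (fun x : X => F x u).

Lemma orbit_closure_trans a b : closure (orbit_plus F b) a ->
  closure (orbit_plus F a) `<=` closure (orbit_plus F b).
Proof.
move=> cla; have /closure_id -> := @closed_closure _ (orbit_plus F b).
apply: closureS => _ [n [w ->]] B /(phi_continuous F hF n w a) /cla.
move=> [_ [[m [v ->]] Bv]]; exists (phi F (m + n) b (concat_ctrl m v w)).
by split; [exists (m + n)%N, (concat_ctrl m v w)|rewrite phi_concat_hi].
Qed.

(* A trajectory piece leaving and returning to a control set stays in it:
   otherwise adding the piece to Q would give a larger set with (i), (ii). *)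
Lemma control_set_path {Q : set X} {x : X} {m : nat} {w : nat -> U} :
  control_set F Q -> Q x -> Q (phi F m x w) ->
  forall j, (j <= m)%N -> Q (phi F j x w).
Proof.
move=> [[Qinv Qapprox] Qmax] Qx Qz.
pose Q' := Q `|` [set phi F j x w | j in [set j | (j <= m)%N]].
suff <- : Q' = Q by move=> j jm; right; exists j.
apply: Qmax; last by move=> y Qy; left.
have x_approx p : Q' p -> closure (orbit_plus F p) x.
  move=> [Qp|[j jm <-]]; first exact: Qapprox.
  have : orbit_plus F (phi F j x w) (phi F m x w).
    by exists (m - j)%N, (fun n => w (j + n)%N); rewrite -phi_shift subnKC.
  move=> /subset_closure /orbit_closure_trans; apply; exact: Qapprox.
split=> [p [Qp|[j jm <-]]|p Q'p y Q'y].
- by have [v Qv] := Qinv p Qp; exists v => k; left.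
- have [v Qv] := Qinv _ Qz; exists (concat_ctrl (m - j) (fun n => w (j + n)%N) v).
  move=> k; have [km|km] := leqP k (m - j)%N.
    rewrite phi_concat_lo // -phi_shift; right; exists (j + k)%N => //=.
    by rewrite -leq_subRL.
  rewrite -(subnKC (ltnW km)) phi_concat_hi -phi_shift subnKC //.
  by left; apply: Qv.
- apply: (orbit_closure_trans _ _ (x_approx _ Q'p)).
  case: Q'y => [Qy|[j jm <-]]; first exact: Qapprox.
  by apply: subset_closure; exists j, w.
Qed.

Lemma control_set_reach {Q : set X} {x : X} {V : set X} : control_set F Q -> Q x ->
  open V -> V !=set0 -> V `<=` Q -> exists m w, V (phi F m x w).
Proof.
move=> [[_ Qapprox] _] Qx oV [v Vv] VQ.
have /(_ V (open_nbhs_nbhs (conj oV Vv))) := Qapprox x Qx v (VQ v Vv).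
by move=> [_ [[m [w ->]] Vm]]; exists m, w.
Qed.

End ControlSets.

Section Topology.

Lemma enum_card_le {T : Type} {A : set T} {C : nat} : (A #<= `I_C)%card ->
  A !=set0 -> exists g : nat -> T, A `<=` g @` `I_C.
Proof.
move=> /pfcard_geP [-> [] //|/surjfunPex [g ->]] _.
by exists g.
Qed.

Lemma cover_closure_open {T : topologicalType} {S : nat -> set T} {C : nat}
    {W : set T} :
  open W -> W !=set0 -> (forall y, W y -> exists2 i, (i < C)%N & S i y) ->
  exists i V, [/\ (i < C)%N, open V, V !=set0, V `<=` W & V `<=` closure (S i)].
Proof.
elim: C W => [|C IH] W oW [w0 Ww0] cover; first by have [] := cover _ Ww0.
have [[z [Wz nz]]|Wcl] := pselect ((W `&` ~` closure (S C)) !=set0); last first.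
  exists C, W; split => //; first by exists w0.
  by move=> y Wy; apply: contrapT => ny; apply: Wcl; exists y.
have oW' : open (W `&` ~` closure (S C)).
  by apply: openI => //; apply: closed_openC; exact: closed_closure.
have cover' y : (W `&` ~` closure (S C)) y -> exists2 i, (i < C)%N & S i y.
  move=> [Wy ny]; have [i iC Si] := cover y Wy.
  move: iC; rewrite ltnS leq_eqVlt => /orP[/eqP ei|iC]; last by exists i.
  by exfalso; apply: ny; rewrite -ei; exact: subset_closure.
have [i [V [iC oV nV VW Vcl]]] := IH _ oW' (ex_intro _ z (conj Wz nz)) cover'.
exists i, V; split => //; first exact: ltnW.
by move=> y /VW [].
Qed.

Lemma ultra_pigeonhole {T : Type} {G : set_system T} (P : nat -> set T) {C : nat} :
  UltraFilter G -> (forall t, exists2 i, (i < C)%N & P i t) ->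
  exists2 i, (i < C)%N & G (P i).
Proof.
move=> UG cover; apply: contrapT => none.
have notP (i : 'I_C) : G (~` P i).
  have [GP|//] := in_ultra_setVsetC (P i) UG.
  by exfalso; apply: none; exists i.
have /filter_ex [t Pt] : G [set t | forall i : 'I_C, ~ P i t].
  exact: (filter_forall (f := fun i : 'I_C => ~` P i)).
by have [i iC] := cover t; apply: (Pt (Ordinal iC)).
Qed.

Lemma ptws_compact {T : topologicalType} :
  compact [set: T] -> compact [set: {ptws nat -> T}].
Proof.
move=> cT; have := @tychonoff nat (fun=> T) (fun=> setT) (fun=> cT).
by congr compact; apply/seteqP; split.
Qed.

End Topology.

Section Invariance.
Context {R : realType} {X U : metricType R} (F : X -> U -> X).

Definition stays_near (eps : R) (Q : set X) (y : X) (w : nat -> U) : Prop :=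
  forall k, nbhd_set eps Q (phi F k y w).

Definition uniformly_finitely_invariant (eps : R) (Q : set X) : Prop :=
  exists2 Fs : set (nat -> U), finite_set Fs &
    forall y, Q y -> exists2 w, Fs w & stays_near eps Q y w.

(* A single control is in particular a finite family. *)
Lemma equi_finitely_equi Q :
  equi_invariant F Q -> finitely_equi_invariant F Q.
Proof.
move=> EQ x Qx; have [_ EQx] := EQ x Qx; split => // eps e0.
have [d [d0 [w Hw]]] := EQx eps e0; exists d; split => //.
exists [set w]; split; first exact: finite_set1.
by move=> y yQ; exists w => //; exact: Hw.
Qed.

(* A uniform family is a local one around every point, with any radius. *)
Lemma uniform_finitely_equi Q :
  (forall eps, 0 < eps -> uniformly_finitely_invariant eps Q) ->
  finitely_equi_invariant F Q.
Proof.
move=> UQ x Qx; split => // eps e0; have [Fs fFs HFs] := UQ eps e0.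
exists 1; split => //; exists Fs; split => // y [_ Qy].
exact: HFs.
Qed.

(* A uniform family spans Q at every horizon n. *)
Lemma uniform_bounded_complexity Q :
  (forall eps, 0 < eps -> uniformly_finitely_invariant eps Q) ->
  bounded_invariance_complexity F Q.
Proof.
move=> UQ eps e0.
have [Fs /finite_setP [C /card_eqPle [FsC _]] HFs] := UQ eps e0.
exists C => n _; exists Fs; split => //.
apply/seteqP; split => [y Qy|y [_ _ []//]].
by have [w Fw Hw] := HFs y Qy; exists w => //; split => // k _; exact: Hw.
Qed.

(* Compactness of Q turns the local finite families into a global one; the
   covering argument runs along the filter of finite sets of controls,
   directed by inclusion. *)
Lemma finitely_equi_uniform Q : compact Q -> finitely_equi_invariant F Q ->
  forall eps, 0 < eps -> uniformly_finitely_invariant eps Q.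
Proof.
move=> cQ FQ eps e0.
pose Fin := filter_from [set S0 : set (nat -> U) | finite_set S0]
  (fun S0 => [set S | S0 `<=` S]).
have FinF : Filter Fin.
  apply: filter_from_filter; first by exists set0; exact: finite_set0.
  move=> A B fA fB; exists (A `|` B); first by rewrite /= finite_setU.
  by move=> S ABS; split => w ?; apply: ABS; [left|right].
pose P (S : set (nat -> U)) (y : X) := Q y -> exists2 w, S w & stays_near eps Q y w.
have [S0 fS0 S0P] : Fin [set S | Q `<=` P S].
  apply: ((compact_near_coveringP Q).1 cQ _ Fin P FinF) => x Qx.
  have [_ /(_ eps e0) [d [d0 [Fs [fFs HFs]]]]] := FQ x Qx.
  apply: (@filter_pair_set _ _ _ _ _ FinF (oball x d) [set S | Fs `<=` S]).
    move=> y S yx FsS Qy; have [w Fw Hw] := HFs y (conj yx Qy).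
    by exists w => //; exact: FsS.
  split; last by exists Fs.
  by apply/nbhs_ballP; exists d => // y; rewrite ballEmdist.
by exists S0 => // y Qy; exact: (S0P S0 (@subset_refl _ S0) y Qy Qy).
Qed.

Lemma bounded_complexity_families Q eps C : Q !=set0 ->
  (forall n, (0 < n)%N -> r_inv_le F n eps Q C) ->
  forall n, exists g : nat -> (nat -> U), forall y, Q y ->
    exists2 i, (i < C)%N & forall k, (k <= n)%N -> nbhd_set eps Q (phi F k y (g i)).
Proof.
move=> [y0 Qy0] QC n; have [Fs [span card]] := QC n.+1 isT.
have cover y : Q y -> exists2 w, Fs w & Qnw F eps n.+1 w Q y.
  by rewrite {1}span => -[w]; exists w.
have [|g Fsg] := enum_card_le card.
  by have [w Fw _] := cover y0 Qy0; exists w.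
exists g => y /cover [w /Fsg [i iC <-] [_ gi]].
by exists i => // k kn; apply: gi.
Qed.

(* Goodness up to larger and larger horizons passes to cluster points of the
   controls, since phi(k, y, .) is continuous for the pointwise topology. *)
Lemma stays_near_cluster {Q : set X} {eps : R} {y : X} {G : set_system nat}
    {h : nat -> {ptws nat -> U}} {w : {ptws nat -> U}} :
  continuous (fun p : nat * X * {ptws nat -> U} => phi F p.1.1 p.1.2 p.2) ->
  Q !=set0 -> 0 < eps -> Filter G -> (forall k, G [set n | (k <= n)%N]) ->
  G [set n | forall k, (k <= n)%N -> nbhd_set (eps / 2) Q (phi F k y (h n))] ->
  cluster (h @ G) w -> stays_near eps Q y w.
Proof.
move=> hphi Qn e0 FG Gge Gnear hw k.
have e20 : 0 < eps / 2 by rewrite divr_gt0.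
have near_w := near_mdist_lt (phi_continuous_ctrl F hphi k y w) e20.
pose N := [set n | forall k, (k <= n)%N -> nbhd_set (eps / 2) Q (phi F k y (h n))].
have Gh : (h @ G) (h @` (N `&` [set n | (k <= n)%N])).
  by apply: (filterS (P := N `&` _)) (filterI Gnear (Gge k)) => n Nn; exists n.
have [_ [[n [Nn kn] <-] wn]] := hw _ _ Gh near_w.
exact: nbhd_set_half Qn (Nn k kn) wn.
Qed.

Lemma bounded_complexity_uniform Q : compact [set: U] ->
  continuous (fun p : nat * X * {ptws nat -> U} => phi F p.1.1 p.1.2 p.2) ->
  Q !=set0 -> bounded_invariance_complexity F Q ->
  forall eps, 0 < eps -> uniformly_finitely_invariant eps Q.
Proof.
move=> cU hphi Qn BQ eps e0.
have e20 : 0 < eps / 2 by rewrite divr_gt0.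
have [C /(bounded_complexity_families _ _ _ Qn) /choice [g gP]] := BQ _ e20.
have [G [UG ooG]] := @ultraFilterLemma nat \oo _.
have /choice [w wP] : forall i, exists w : {ptws nat -> U},
    cluster ((fun n => g n i : {ptws nat -> U}) @ G) w.
  move=> i; have [w [_ cw]] := ptws_compact cU
    ((fun n => g n i : {ptws nat -> U}) @ G) _ filterT.
  by exists w.
exists (w @` `I_C); first exact/finite_image/finite_II.
move=> y Qy; have [i iC Gi] := ultra_pigeonhole
  (fun i n => forall k, (k <= n)%N -> nbhd_set (eps / 2) Q (phi F k y (g n i)))
  UG (fun n => gP n y Qy).
exists (w i); first by exists i.
apply: (stays_near_cluster hphi Qn e0 _ _ Gi (wP i)) => k.
exact: ooG (nbhs_infty_ge k).
Qed.

Section EquiInvariance.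
Hypothesis hF : forall u : U, continuous (fun x : X => F x u).

Lemma stays_near_closure {Q : set X} {eps : R} {w : nat -> U} : Q !=set0 -> 0 < eps ->
  closure [set y | stays_near (eps / 2) Q y w] `<=` [set z | stays_near eps Q z w].
Proof.
move=> Qn e0 z clz k.
have e20 : 0 < eps / 2 by rewrite divr_gt0.
have [y [yQ zy]] := clz _ (near_mdist_lt (phi_continuous F hF k w z) e20).
exact: nbhd_set_half Qn (yQ k) zy.
Qed.

Lemma uniform_open_piece {Q : set X} {eps : R} : 0 < eps -> interior Q !=set0 ->
  uniformly_finitely_invariant (eps / 2) Q ->
  exists V w, [/\ open V, V !=set0, V `<=` Q & forall z, V z -> stays_near eps Q z w].
Proof.
move=> e0 [z0 Qz0] [Fs fFs FsQ].
have Qn : Q !=set0 by exists z0; exact: interior_subset.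
have [C FsC] := (finite_set_leP Fs).1 fFs.
have [|g Fsg] := enum_card_le FsC.
  by have [y Qy] := Qn; have [w Fw _] := FsQ y Qy; exists w.
have cover y : interior Q y ->
    exists2 i, (i < C)%N & [set y | stays_near (eps / 2) Q y (g i)] y.
  by move=> /interior_subset /FsQ [w /Fsg [i iC <-] gi]; exists i.
have [i [V [_ oV nV VQ Vcl]]] := cover_closure_open (open_interior Q)
  (ex_intro _ z0 Qz0) cover.
exists V, (g i); split => // [z /VQ /interior_subset //|z /Vcl].
exact: stays_near_closure Qn e0 z.
Qed.

(* Steer y into the good open set along a trajectory of a nearby point of Q
   (which stays in Q), then switch to the good control. *)
Lemma uniform_equi Q : control_set F Q -> interior Q !=set0 ->
  (forall eps, 0 < eps -> uniformly_finitely_invariant eps Q) ->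
  equi_invariant F Q.
Proof.
move=> cQ intQ UQ x Qx; split => // eps e0.
have e20 : 0 < eps / 2 by rewrite divr_gt0.
have [V [v [oV nV VQ Vv]]] := uniform_open_piece e0 intQ (UQ _ e20).
have [m [w Vm]] := control_set_reach F cQ Qx oV nV VQ.
have pathQ := control_set_path F hF cQ Qx (VQ _ Vm).
have near_x : \forall y \near x, V (phi F m y w) /\
    forall j : 'I_m, mdist (phi F j x w) (phi F j y w) < eps.
  apply: filterI.
    exact: phi_continuous F hF m w x V (open_nbhs_nbhs (conj oV Vm)).
  apply: filter_forall => j; exact: near_mdist_lt (phi_continuous F hF j w x) e0.
have [d d0 dx] := (nbhs_ballP _ _).1 near_x.
exists d; split => //; exists (concat_ctrl m w v) => y [xy Qy] k.
have /dx [Vy close] : ball x d y by rewrite ballEmdist.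
have [km|mk] := ltnP k m.
  rewrite phi_concat_lo ?(ltnW km) //; apply/nbhd_setP; first by exists x.
  exists (phi F k x w); first exact: pathQ (ltnW km).
  by rewrite metric_sym; exact: (close (Ordinal km)).
by rewrite -(subnKC mk) phi_concat_hi; exact: Vv.
Qed.

End EquiInvariance.

End Invariance.

Theorem mainTheorem4 (R : realType) (X U : metricType R) (F : X -> U -> X)
  (Q : set X) :
  compact [set: U] ->
  (forall u : U, continuous (fun x : X => F x u)) ->
  continuous (fun p : nat * X * {ptws nat -> U} => phi F p.1.1 p.1.2 p.2) ->
  compact Q ->
  control_set F Q ->
  interior Q !=set0 ->
  (equi_invariant F Q <-> finitely_equi_invariant F Q) /\
  (finitely_equi_invariant F Q <-> bounded_invariance_complexity F Q).
Proof.
move=> cU hF hphi cQ csQ intQ.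
have Qn : Q !=set0 by case: intQ => z /interior_subset Qz; exists z.
have uniformP : finitely_equi_invariant F Q <->
    forall eps, 0 < eps -> uniformly_finitely_invariant F eps Q.
  by split; [exact: finitely_equi_uniform | exact: uniform_finitely_equi].
split; split.
- exact: equi_finitely_equi.
- by move/uniformP; exact: uniform_equi.
- by move/uniformP; exact: uniform_bounded_complexity.
- by move/(bounded_complexity_uniform F Q cU hphi Qn)/uniformP.
Qed.
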